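(* Let $X$ and $Y$ be completely regular Hausdorff spaces and let $c: X\times Y\to\mathbb{R}$ be a bounded function with property (H). Set $$A:=\{\phi^{c\bar c}+\inf_Y\phi^c:\ \phi\in C_b(X)\}\subseteq C_b(X),\qquad B:=\{\phi^{c}-\inf_Y\phi^c:\ \phi\in C_b(X)\}\subseteq C_b(Y).$$ Then the closures $\overline{A}^{\mathcal{T}_p}$ (in $(C_b(X),\mathcal{T}_p)$) and $\overline{B}^{\mathcal{T}_p}$ (in $(C_b(Y),\mathcal{T}_p)$) are uniformly bounded and equicontinuous, i.e. $\overline{A}^{\mathcal{T}_p}\in\mathcal{E}(X)$ and $\overline{B}^{\mathcal{T}_p}\in\mathcal{E}(Y)$. In particular they are compact in $(C_b(X),\mathcal{T}_p)$ and $(C_b(Y),\mathcal{T}_p)$ respectively, and $\overline{A}^{\mathcal{T}_p}\times\overline{B}^{\mathcal{T}_p}$ is compact in the product space $(C_b(X),\mathcal{T}_p)\times(C_b(Y),\mathcal{T}_p)$.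
   Context: $C_b(Z)$ denotes the space of real-valued bounded continuous functions on $Z$; $\mathcal{T}_p$ is the topology of pointwise convergence on $C_b(Z)$; $\mathcal{E}(Z)$ is the family of uniformly bounded equicontinuous subsets of $C_b(Z)$. For $\xi: X\to\mathbb{R}$, $\xi^c(y):=\inf_{x\in X}\{c(x,y)-\xi(x)\}$; for $\zeta:Y\to\mathbb{R}$, $\zeta^{\bar c}(x):=\inf_{y\in Y}\{c(x,y)-\zeta(y)\}$; $\phi^{c\bar c}:=(\phi^c)^{\bar c}$. Define $\overline{d}_c(x,x'):=\sup_{y\in Y}|c(x,y)-c(x',y)|$ and $\underline{d}_c(y,y'):=\sup_{x\in X}|c(x,y)-c(x,y')|$. The function $c$ has property (H) if for every $x_0\in X$, $\lim_{x\to x_0}\overline{d}_c(x,x_0)=0$, and for every $y_0\in Y$, $\lim_{y\to y_0}\underline{d}_c(y,y_0)=0$ (limits in the topologies of $X$ and $Y$). *)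

From HB Require Import structures.
From mathcomp Require Import all_boot all_order all_algebra.
From mathcomp Require Import all_classical all_reals all_analysis.
Set Implicit Arguments. Unset Strict Implicit. Unset Printing Implicit Defensive.
Import Order.TTheory GRing.Theory Num.Theory.
Import numFieldNormedType.Exports.
Local Open Scope classical_set_scope.
Local Open Scope ring_scope.

Definition Cb {R : realType} {Z : topologicalType} : set (Z -> R) :=
  [set f | continuous f /\ exists M : R, forall z, `|f z| <= M].

Definition ctrans {R : realType} {X Y : Type} (c : X -> Y -> R) (xi : X -> R)
  : Y -> R := fun y => inf [set c x y - xi x | x in [set: X]].

Definition cbartrans {R : realType} {X Y : Type} (c : X -> Y -> R) (zeta : Y -> R)
  : X -> R := fun x => inf [set c x y - zeta y | y in [set: Y]].

Definition infY {R : realType} {Y : Type} (g : Y -> R) : R :=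
  inf [set g y | y in [set: Y]].

Definition dbar {R : realType} {X Y : Type} (c : X -> Y -> R) (x x' : X) : R :=
  sup [set `|c x y - c x' y| | y in [set: Y]].

Definition dunder {R : realType} {X Y : Type} (c : X -> Y -> R) (y y' : Y) : R :=
  sup [set `|c x y - c x y'| | x in [set: X]].

Definition propertyH {R : realType} {X Y : topologicalType} (c : X -> Y -> R) :=
  (forall x0 : X, (fun x => dbar c x x0) @ x0 --> (0 : R)) /\
  (forall y0 : Y, (fun y => dunder c y y0) @ y0 --> (0 : R)).

Definition bounded_fun2 {R : realType} {X Y : Type} (c : X -> Y -> R) :=
  exists M : R, forall x y, `|c x y| <= M.

Definition setA {R : realType} {X Y : topologicalType} (c : X -> Y -> R) : set (X -> R) :=
  [set (fun x => cbartrans c (ctrans c phi) x + infY (ctrans c phi))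
    | phi in (@Cb R X)].

Definition setB {R : realType} {X Y : topologicalType} (c : X -> Y -> R) : set (Y -> R) :=
  [set (fun y => ctrans c phi y - infY (ctrans c phi)) | phi in (@Cb R X)].

(* closure in (C_b(Z), T_p): subspace closure = ambient pointwise closure meet C_b(Z) *)
Definition ptws_closure {R : realType} {Z : topologicalType} (F : set (Z -> R))
  : set (Z -> R) := closure (F : set {ptws Z -> R}) `&` (@Cb R Z).

Definition unif_bounded {R : realType} {Z : Type} (F : set (Z -> R)) :=
  exists M : R, forall f, F f -> forall z, `|f z| <= M.

Definition in_E {R : realType} {Z : topologicalType} (F : set (Z -> R)) :=
  and (forall f, F f -> (@Cb R Z) f) (and (unif_bounded F) (@equicontinuous Z R^o _ F id)).

From HB Require Import structures.
From mathcomp Require Import all_boot all_order all_algebra.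
From mathcomp Require Import all_classical all_reals all_analysis.
From mathcomp Require Import lra.
Import Order.TTheory GRing.Theory Num.Theory.
Import numFieldNormedType.Exports.
Local Open Scope classical_set_scope.
Local Open Scope ring_scope.
Set Implicit Arguments. Unset Strict Implicit.

(* Write K for a bound of |c|. For bounded phi, psi := phi^c is an infimum of the
   functions y |-> c(x, y) - phi(x); each of them has oscillation at most 2K and
   modulus of continuity dunder_c(., y0) at y0, and infima inherit both.  Hence
   psi - inf psi takes values in [0, 2K] and is controlled by dunder_c, while
   phi^{c cbar} + inf psi = (psi - inf psi)^cbar is bounded by 3K and controlled
   by dbar_c.  Property (H) makes both families equicontinuous; equicontinuity
   and the bounds pass to pointwise closures, which therefore consist of
   continuous functions and lie in a product of compact intervals (Tychonoff). *)

Section inf_image.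
Variables (R : realType) (T : Type).
Implicit Types (g h : T -> R) (m : R).

Lemma image_setT_uninhabited g : ~ inhabited T -> [set g t | t in [set: T]] = set0.
Proof. by move=> nT; apply/seteqP; split => // y [u _ _]; apply: nT; exists. Qed.

Lemma inf_image_le g m u : (forall t, m <= g t) -> inf [set g t | t in [set: T]] <= g u.
Proof.
move=> gm; apply: ge_inf; last by exists u.
by exists m => _ [s _ <-]; exact: gm.
Qed.

Lemma lb_le_inf_image g m (t0 : T) :
  (forall t, m <= g t) -> m <= inf [set g t | t in [set: T]].
Proof.
move=> gm; apply: lb_le_inf; first by exists (g t0), t0.
by move=> _ [s _ <-]; exact: gm.
Qed.

Lemma norm_inf_image_le g B :
  0 <= B -> (forall t, `|g t| <= B) -> `|inf [set g t | t in [set: T]]| <= B.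
Proof.
move=> B0 gB; have [[t0]|nT] := pselect (inhabited T); last first.
  by rewrite image_setT_uninhabited // inf0 normr0.
have gNB t : - B <= g t by have := gB t; rewrite ler_norml => /andP[].
have := lb_le_inf_image t0 gNB; have := inf_image_le t0 gNB.
have := gB t0; rewrite !ler_norml => /andP[? ?] ? ?; apply/andP; split; lra.
Qed.

Lemma dist_inf_image_le g h m d :
  0 <= d -> (forall t, m <= g t) -> (forall t, m <= h t) ->
  (forall t, `|g t - h t| <= d) ->
  `|inf [set g t | t in [set: T]] - inf [set h t | t in [set: T]]| <= d.
Proof.
move=> d0 gm hm ghd; have [[t0]|nT] := pselect (inhabited T); last first.
  by rewrite !image_setT_uninhabited // subrr normr0.
have ghd' t : g t - d <= h t /\ h t - d <= g t.
  by have := ghd t; rewrite ler_norml => /andP[? ?]; split; lra.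
have hg : inf [set h t | t in [set: T]] - d <= inf [set g t | t in [set: T]].
  apply: (lb_le_inf_image t0) => t; have := inf_image_le t hm.
  by have := (ghd' t).2; lra.
have gh : inf [set g t | t in [set: T]] - d <= inf [set h t | t in [set: T]].
  apply: (lb_le_inf_image t0) => t; have := inf_image_le t gm.
  by have := (ghd' t).1; lra.
by rewrite ler_norml; apply/andP; split; lra.
Qed.

Lemma inf_image_addr g m a (t0 : T) : (forall t, m <= g t) ->
  inf [set g t + a | t in [set: T]] = inf [set g t | t in [set: T]] + a.
Proof.
move=> gm; have gam t : m + a <= g t + a by rewrite lerD2r.
apply/le_anti/andP; split.
  rewrite -lerBlDr; apply: (lb_le_inf_image t0) => t.
  by rewrite lerBlDr; exact: inf_image_le gam.
apply: (lb_le_inf_image t0) => t; rewrite lerD2r; exact: inf_image_le gm.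
Qed.

End inf_image.

Section dbar.
Variables (R : realType) (X Y : Type) (c : X -> Y -> R) (K : R).
Hypothesis cK : forall x y, `|c x y| <= K.

Lemma le_dbar x x' y : `|c x y - c x' y| <= dbar c x x'.
Proof.
apply: ub_le_sup; last by exists y.
exists (K + K) => _ [u _ <-].
exact: le_trans (ler_normB _ _) (lerD (cK _ _) (cK _ _)).
Qed.

Lemma dbar_ge0 x x' : 0 <= dbar c x x'.
Proof.
have [[y]|nY] := pselect (inhabited Y); first exact: le_trans (le_dbar x x' y).
by rewrite /dbar image_setT_uninhabited // sup0.
Qed.

End dbar.

Section ctrans.
Variables (R : realType) (X Y : Type) (c : X -> Y -> R) (K : R).
Hypotheses (K0 : 0 <= K) (cK : forall x y, `|c x y| <= K).
Variables (xi : X -> R) (B : R).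
Hypotheses (B0 : 0 <= B) (xiB : forall x, `|xi x| <= B).

Let c_sub_xi_ge x y : - (K + B) <= c x y - xi x.
Proof.
have := cK x y; have := xiB x; rewrite !ler_norml => /andP[? ?] /andP[? ?]; lra.
Qed.

Lemma norm_ctrans_le y : `|ctrans c xi y| <= K + B.
Proof.
apply: norm_inf_image_le => [|x]; first exact: addr_ge0.
exact: le_trans (ler_normB _ _) (lerD (cK _ _) (xiB _)).
Qed.

Lemma dist_ctrans_le y y' d : 0 <= d -> (forall x, `|c x y - c x y'| <= d) ->
  `|ctrans c xi y - ctrans c xi y'| <= d.
Proof.
move=> d0 cd; apply: dist_inf_image_le d0 (c_sub_xi_ge ^~ y) (c_sub_xi_ge ^~ y') _.
by move=> x; rewrite opprB addrA subrK.
Qed.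

Lemma infY_ctrans_le y : infY (ctrans c xi) <= ctrans c xi y.
Proof.
apply: (@inf_image_le _ _ _ (- (K + B))) => u.
by have := norm_ctrans_le u; rewrite ler_norml => /andP[].
Qed.

Lemma ctrans_sub_infY_le y : ctrans c xi y - infY (ctrans c xi) <= K + K.
Proof.
rewrite lerBlDl -lerBlDr; apply: (lb_le_inf_image y) => u.
have := @dist_ctrans_le y u (K + K) (addr_ge0 K0 K0).
have cKK x : `|c x y - c x u| <= K + K.
  exact: le_trans (ler_normB _ _) (lerD (cK _ _) (cK _ _)).
by move=> /(_ cKK); rewrite ler_norml => /andP[_]; lra.
Qed.

Lemma norm_ctrans_sub_infY_le y : `|ctrans c xi y - infY (ctrans c xi)| <= K + K.
Proof.
have := infY_ctrans_le y; have := ctrans_sub_infY_le y.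
by rewrite ler_norml => ? ?; apply/andP; split; lra.
Qed.

Lemma cbartrans_ctrans_add_infY x :
  cbartrans c (ctrans c xi) x + infY (ctrans c xi) =
  cbartrans c (fun y => ctrans c xi y - infY (ctrans c xi)) x.
Proof.
have [[y0]|nY] := pselect (inhabited Y); last first.
  by rewrite /cbartrans /infY !image_setT_uninhabited // inf0 addr0.
have gm y : - K - (K + B) <= c x y - ctrans c xi y.
  have := cK x y; have := norm_ctrans_le y.
  by rewrite !ler_norml => /andP[? ?] /andP[? ?]; lra.
rewrite /cbartrans -(inf_image_addr _ y0 gm).
by congr (inf _); apply: eq_imagel => y _; rewrite opprB addrA addrAC.
Qed.

End ctrans.

Section pointwise_closure.
Variables (R : realType) (Z : topologicalType).
Implicit Types (S : set (Z -> R)) (K : R).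

Lemma compact_ptws_norm_le K : compact [set f : {ptws Z -> R} | forall z, `|f z| <= K].
Proof.
have -> : [set f : {ptws Z -> R} | forall z, `|f z| <= K] =
          [set f | forall z, `[-K, K]%classic (f z)].
  by apply/seteqP; split => f /= fK z; have := fK z; rewrite in_itv /= ler_norml.
exact: tychonoff (fun=> @segment_compact R (- K) K).
Qed.

Lemma closure_ptws_norm_le S K : (forall f, S f -> forall z, `|f z| <= K) ->
  forall f, closure (S : set {ptws Z -> R}) f -> forall z, `|f z| <= K.
Proof.
move=> SK; have box_closed : closed [set f : {ptws Z -> R} | forall z, `|f z| <= K].
  apply: compact_closed; last exact: compact_ptws_norm_le.
  by apply: hausdorff_product => z; exact: Rhausdorff.
suff : closure (S : set {ptws Z -> R}) `<=` [set f | forall z, `|f z| <= K] by [].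
by rewrite closureE; apply: smallest_sub box_closed _ => f /SK.
Qed.

Lemma equicontinuous_modulus S (w : Z -> Z -> R) :
  (forall f, S f -> forall z z0, `|f z - f z0| <= w z z0) ->
  (forall z0, (fun z => w z z0) @ z0 --> 0) -> @equicontinuous Z R^o _ S id.
Proof.
move=> Sw w0 z0 E; rewrite -entourage_ballE => -[e /= e0 eE].
have w_small := (cvgrPdist_lt _ _).1 (w0 z0) e e0.
near=> z => f Sf; apply: eE; rewrite /= -ball_normE /= distrC.
apply: le_lt_trans (Sw f Sf z z0) (le_lt_trans (ler_norm _) _).
by rewrite -normrN -sub0r; near: z; exact: w_small.
Unshelve. all: by end_near. Qed.

Section bounded_equicontinuous.
Variables (S : set (Z -> R)) (K : R).
Hypotheses (SK : forall f, S f -> forall z, `|f z| <= K)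
  (Seq : @equicontinuous Z R^o _ S id).

Lemma ptws_closureE : ptws_closure S = closure (S : set {ptws Z -> R}).
Proof.
have clSeq : @equicontinuous Z R^o _ (closure (S : set {ptws Z -> R})) id.
  exact: equicontinuous_closure.
apply/setIidl => f Sf; split; first exact: (equicontinuous_continuous clSeq).
by exists K; exact: (closure_ptws_norm_le SK Sf).
Qed.

Lemma in_E_ptws_closure : in_E (ptws_closure S).
Proof.
rewrite ptws_closureE; split; last split.
- by rewrite -ptws_closureE => f [].
- by exists K; exact: closure_ptws_norm_le.
- exact: equicontinuous_closure.
Qed.

Lemma compact_ptws_closure : compact (ptws_closure S : set {ptws Z -> R}).
Proof.
rewrite ptws_closureE; apply: (subclosed_compact _ (compact_ptws_norm_le (K := K))).
  exact: closed_closure.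
exact: (closure_ptws_norm_le SK).
Qed.

End bounded_equicontinuous.
End pointwise_closure.

Section transform_families.
Variables (R : realType) (X Y : topologicalType) (c : X -> Y -> R) (K : R).
Hypotheses (K0 : 0 <= K) (cK : forall x y, `|c x y| <= K).

(* [cbartrans c] and [dunder c] are, by conversion, [ctrans] and [dbar] of the
   transposed cost, so the lemmas above apply to them through [cK_flip]. *)
Let cK_flip y x : `|(fun y x => c x y) y x| <= K := cK x y.

Let Cb_norm_le (phi : X -> R) : Cb phi -> exists2 B : R, 0 <= B & forall x, `|phi x| <= B.
Proof.
by move=> [_ [M phiM]]; exists `|M| => // x; exact: le_trans (phiM x) (ler_norm M).
Qed.

Lemma setB_norm_le f : setB c f -> forall y, `|f y| <= K + K.
Proof.
move=> [phi /Cb_norm_le[B B0 phiB] <-] y.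
exact (norm_ctrans_sub_infY_le K0 cK B0 phiB y).
Qed.

Lemma setB_modulus f : setB c f -> forall y y0, `|f y - f y0| <= dunder c y y0.
Proof.
move=> [phi /Cb_norm_le[B B0 phiB] <-] y y0 /=; rewrite opprB addrA subrK.
apply: (dist_ctrans_le cK phiB (dbar_ge0 cK_flip y y0)) => x.
exact (le_dbar cK_flip y y0 x).
Qed.

Lemma setA_norm_le f : setA c f -> forall x, `|f x| <= K + (K + K).
Proof.
move=> [phi /Cb_norm_le[B B0 phiB] <-] x /=.
rewrite (cbartrans_ctrans_add_infY K0 cK B0 phiB).
exact (norm_ctrans_le K0 cK_flip (addr_ge0 K0 K0) (norm_ctrans_sub_infY_le K0 cK B0 phiB) x).
Qed.

Lemma setA_modulus f : setA c f -> forall x x0, `|f x - f x0| <= dbar c x x0.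
Proof.
move=> [phi /Cb_norm_le[B B0 phiB] <-] x x0 /=.
rewrite !(cbartrans_ctrans_add_infY K0 cK B0 phiB).
apply: (dist_ctrans_le cK_flip (norm_ctrans_sub_infY_le K0 cK B0 phiB) (dbar_ge0 cK x x0)).
by move=> y; exact (le_dbar cK x x0 y).
Qed.

End transform_families.

Theorem mainTheorem2 (R : realType) (X Y : topologicalType)
  (crX : completely_regular_space X) (hX : hausdorff_space X)
  (crY : completely_regular_space Y) (hY : hausdorff_space Y)
  (c : X -> Y -> R) (cbd : bounded_fun2 c) (cH : propertyH c) :
  in_E (ptws_closure (setA c)) /\ in_E (ptws_closure (setB c)) /\
  compact (ptws_closure (setA c) : set {ptws X -> R}) /\
  compact (ptws_closure (setB c) : set {ptws Y -> R}) /\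
  compact (ptws_closure (setA c) `*` ptws_closure (setB c)
            : set ({ptws X -> R} * {ptws Y -> R})%type).
Proof.
case: cbd => M cM.
have cK x y : `|c x y| <= `|M| by exact: le_trans (cM x y) (ler_norm M).
have K0 : 0 <= `|M| by [].
have Aeq := equicontinuous_modulus (setA_modulus K0 cK) cH.1.
have Beq := equicontinuous_modulus (setB_modulus cK) cH.2.
have cptA := compact_ptws_closure (setA_norm_le K0 cK) Aeq.
have cptB := compact_ptws_closure (setB_norm_le K0 cK) Beq.
split; first exact: in_E_ptws_closure (setA_norm_le K0 cK) Aeq.
split; first exact: in_E_ptws_closure (setB_norm_le K0 cK) Beq.
by do 2 split => //; exact: compact_setX.
Qed.
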